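(* Let $m\ge1$ and let $F=(F_0,F_1,F_2)$ be a gapset filtration of multiplicity $m+1$ and depth $3$, so that $F_0=[1,m]\supseteq F_1\supseteq F_2\neq\emptyset$. Let $a_i=\max F_i$ and $F'_i=F_i\setminus\{a_i\}$ for $i=0,1,2$. Then $F'=(F'_0,F'_1,F'_2)$ is a gapset filtration (of multiplicity $m$), i.e. $[1,m-1]\cup(m+F'_1)\cup(2m+F'_2)$ is a gapset.
   Context: A gapset is a finite set $G \subset \mathbb{N}_+$ such that for all $z \in G$, whenever $z=x+y$ with $x,y\in\mathbb{N}_+$, we have $x\in G$ or $y\in G$. Its multiplicity is the least $m\ge1$ with $m\notin G$, and its depth is $\lceil c/m\rceil$ where $c=\max G+1$. For $k\ge1$, a $k$-filtration is a sequence $(F_0,\dots,F_t)$ with $F_0=[1,k-1]\supseteq F_1\supseteq\dots\supseteq F_t$; it is a gapset filtration if $\bigcup_i(ik+F_i)$ is a gapset, and its multiplicity and depth are those of that gapset. Here $j+A=\{j+a:a\in A\}$. *)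

(* Finite subsets of N are represented by seq nat (membership). *)
From mathcomp Require Import all_boot.
Set Implicit Arguments. Unset Strict Implicit. Unset Printing Implicit Defensive.

(* G is a gapset: G ⊂ N+, and every z in G with z = x + y, x,y >= 1, has x or y in G.
   Finiteness is automatic for a seq. *)
Definition is_gapset (G : seq nat) : Prop :=
  (forall z, z \in G -> 0 < z) /\
  (forall z x y, z \in G -> 0 < x -> 0 < y -> x + y = z -> x \in G \/ y \in G).

Definition is_multiplicity (G : seq nat) (m : nat) : Prop :=
  0 < m /\ m \notin G /\ (forall j, 0 < j < m -> j \in G).

Definition gmax (G : seq nat) : nat := \max_(x <- G) x.

(* depth = ceil(c / m) with c = max G + 1 *)
Definition depth (G : seq nat) (m : nat) : nat := ((gmax G).+1 + m.-1) %/ m.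

Definition is_filtration (k : nat) (Fs : seq (seq nat)) : Prop :=
  0 < size Fs /\
  (forall x, (x \in nth [::] Fs 0) = (0 < x < k)) /\
  (forall i, i.+1 < size Fs -> {subset nth [::] Fs i.+1 <= nth [::] Fs i}).

Definition filt_union (k : nat) (Fs : seq (seq nat)) : seq nat :=
  flatten [seq [seq i * k + x | x <- nth [::] Fs i] | i <- iota 0 (size Fs)].

Definition is_gapset_filtration (k : nat) (Fs : seq (seq nat)) : Prop :=
  is_filtration k Fs /\ is_gapset (filt_union k Fs).

Definition rem_max (F : seq nat) : seq nat := [seq x <- F | x != gmax F].

From mathcomp Require Import all_boot.
From mathcomp Require Import zify.

(* A sum x + y of the new gapset with x, y >= m must be 2m + f with f in F_2,
   f < max F_2. If x = m + u and y = m + v with u, v > 0, then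
   2(m+1) + f = (m+1+u) + (m+1+v) in the old gapset puts u or v in F_1, below
   max F_2 <= max F_1; if u = 0 or v = 0, use F_2 ⊆ F_1. *)

Lemma mem_shift c (A : seq nat) x :
  (x \in [seq c + y | y <- A]) = (c <= x) && (x - c \in A).
Proof.
apply/mapP/andP => [[y yA ->]|[cx xA]]; first by rewrite addKn leq_addr.
by exists (x - c); rewrite ?subnKC.
Qed.

Lemma mem_filt_union3 k (A B C : seq nat) x :
  (x \in filt_union k [:: A; B; C]) =
  [|| x \in A, (k <= x) && (x - k \in B) | (2 * k <= x) && (x - 2 * k \in C)].
Proof. by rewrite /filt_union /= !mem_cat !mem_shift in_nil orbF mul0n subn0 mul1n. Qed.

Lemma leq_gmax (F : seq nat) x : x \in F -> x <= gmax F.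
Proof. by move=> xF; apply: (@leq_bigmax_seq _ F xpredT id x). Qed.

Lemma gmax_leq (F : seq nat) b : (forall x, x \in F -> x <= b) -> gmax F <= b.
Proof. by move=> Fb; apply/bigmax_leqP_seq => x xF _; apply: Fb. Qed.

Lemma gmax_subset {A B : seq nat} : {subset A <= B} -> gmax A <= gmax B.
Proof. by move=> AB; apply: gmax_leq => x /AB /leq_gmax. Qed.

Lemma mem_rem_max (F : seq nat) x : (x \in rem_max F) = (x \in F) && (x != gmax F).
Proof. by rewrite /rem_max mem_filter andbC. Qed.

Lemma mem_rem_max_lt (F : seq nat) x : (x \in rem_max F) = (x \in F) && (x < gmax F).
Proof.
rewrite mem_rem_max ltn_neqAle.
by case xF: (x \in F); rewrite //= leq_gmax ?andbT.
Qed.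

Lemma subset_rem_max {A B : seq nat} : {subset A <= B} -> {subset rem_max A <= rem_max B}.
Proof.
move=> AB x; rewrite !mem_rem_max_lt => /andP [/AB xB xA].
by rewrite xB (leq_trans xA) ?gmax_subset.
Qed.

Lemma mem_rem_max_range (F : seq nat) n :
  (forall x, (x \in F) = (0 < x < n.+1)) ->
  forall x, (x \in rem_max F) = (0 < x < n).
Proof.
move=> FE x; rewrite mem_rem_max_lt FE.
case: n FE => [|n] FE; first by apply/idP/idP; lia.
have -> : gmax F = n.+1.
  apply/anti_leq/andP; split; last by apply: leq_gmax; rewrite FE ltnSn.
  by apply: gmax_leq => y; rewrite FE => /andP [].
by apply/idP/idP; lia.
Qed.

Section RemoveMaxima.

Variables (m : nat) (F0 F1 F2 : seq nat).
Hypothesis F0E : forall x, (x \in F0) = (0 < x < m.+1).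
Hypothesis F10 : {subset F1 <= F0}.
Hypothesis F21 : {subset F2 <= F1}.

Let G := filt_union m.+1 [:: F0; F1; F2].
Let G' := filt_union m [:: rem_max F0; rem_max F1; rem_max F2].

Lemma rem_max_F0E x : (x \in rem_max F0) = (0 < x < m).
Proof. exact: mem_rem_max_range. Qed.

Lemma F1_range {x : nat} : x \in F1 -> 0 < x < m.+1.
Proof. by rewrite -F0E; apply: F10. Qed.

Lemma rem_max_F1_lt x : x \in rem_max F1 -> x < m.
Proof.
rewrite mem_rem_max_lt => /andP [_ /leq_trans]; apply.
by rewrite -ltnS; apply: gmax_leq => y /F1_range /andP [].
Qed.

Lemma is_filtration_rem_max : is_filtration m [:: rem_max F0; rem_max F1; rem_max F2].
Proof.
split=> //; split; first exact: rem_max_F0E.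
move=> [|[|i]] //= _ x; last exact: subset_rem_max.
move=> xF1; rewrite rem_max_F0E rem_max_F1_lt // andbT.
by move: xF1; rewrite mem_rem_max => /andP [/F1_range /andP []].
Qed.

Hypothesis gapG : is_gapset G.

Lemma F2_sum_split {f u v : nat} :
  f \in F2 -> 0 < u -> 0 < v -> u + v = f -> (u \in F1) || (v \in F1).
Proof.
move=> fF2 u0 v0 uvf.
have /F21 /F1_range /andP [f0 fm] := fF2.
have Gz : 2 * m.+1 + f \in G.
  by rewrite mem_filt_union3 addKn fF2 leq_addr !orbT.
have [] := gapG.2 _ (m.+1 + u) (m.+1 + v) Gz isT isT ltac:(lia);
  rewrite mem_filt_union3 F0E addKn => /or3P [|/andP [_ ->]|/andP []] //;
  by [lia | rewrite orbT].
Qed.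

Lemma gapset_rem_max : is_gapset G'.
Proof.
split=> [z|z x y].
  rewrite mem_filt_union3 rem_max_F0E !mem_rem_max.
  by case/or3P => [/andP [] // | /and3P [_ /F1_range] | /and3P [_ /F21 /F1_range]]; lia.
rewrite {1}/G' mem_filt_union3 => zG' x0 y0 xyz.
have small w : 0 < w -> w < m -> w \in G'.
  by move=> w0 wm; rewrite mem_filt_union3 rem_max_F0E w0 wm.
have [xm|mx] := ltnP x m; first by left; apply: small.
have [ym|my] := ltnP y m; first by right; apply: small.
have {zG'} [f fF2 zE] : exists2 f, f \in rem_max F2 & z = 2 * m + f.
  case/or3P: zG' => [|/andP [_ /rem_max_F1_lt]|/andP [mz zF2]].
  - by rewrite rem_max_F0E; lia.
  - by lia.
  - by exists (z - 2 * m); rewrite ?subnKC.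
move: fF2; rewrite mem_rem_max_lt => /andP [fF2 f_lt].
have shifted w : m <= w -> w - m <= f -> w - m \in F1 -> w \in G'.
  move=> mw wf wF1; rewrite mem_filt_union3 mw (mem_rem_max_lt F1) wF1.
  by rewrite (leq_ltn_trans wf) ?orbT // (leq_trans f_lt) ?gmax_subset.
have [/orP [/eqP xm | /eqP ym] | /andP [u0 v0]] :
    (x == m) || (y == m) \/ (0 < x - m) && (0 < y - m) by lia.
- right; have yf : y - m = f by lia.
  by apply: shifted; rewrite // yf ?leqnn ?(F21 _ fF2).
- left; have xf : x - m = f by lia.
  by apply: shifted; rewrite // xf ?leqnn ?(F21 _ fF2).
have /orP [uF1|vF1] := F2_sum_split fF2 u0 v0 ltac:(lia).
- by left; apply: shifted => //; lia.
- by right; apply: shifted => //; lia.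
Qed.

End RemoveMaxima.

Theorem mainTheorem14 (m : nat) (F0 F1 F2 : seq nat) :
  1 <= m ->
  is_gapset_filtration m.+1 [:: F0; F1; F2] ->
  is_multiplicity (filt_union m.+1 [:: F0; F1; F2]) m.+1 ->
  depth (filt_union m.+1 [:: F0; F1; F2]) m.+1 = 3 ->
  is_gapset_filtration m [:: rem_max F0; rem_max F1; rem_max F2].
Proof.
move=> _ [[_ [F0E Fsub]] gapG] _ _.
have F10 : {subset F1 <= F0} by apply: (Fsub 0).
have F21 : {subset F2 <= F1} by apply: (Fsub 1).
split; first exact: is_filtration_rem_max.
exact: gapset_rem_max.
Qed.
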